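(* Let $\mathsf{Ax}\subseteq\mathbf{L}$ and let $\mathcal{F}$ be a class of $\mathsf{CK}$-frames such that the canonical frame $\mathcal{X}_{\mathsf{CK}\oplus\mathsf{Ax}}$ belongs to $\mathcal{F}$ and every frame in $\mathcal{F}$ validates every formula of $\mathsf{Ax}$ (all its substitution instances). Then for all $\Gamma\subseteq\mathbf{L}$ and $\varphi\in\mathbf{L}$, $\Gamma\Vdash_{\mathcal{F}}\varphi$ implies $\Gamma\vdash_{\mathsf{Ax}}\varphi$.
   Context: Formulas: $\mathbf{L}$ is generated from a countably infinite set of propositional variables by $\varphi ::= p \mid \bot \mid \varphi\wedge\varphi \mid \varphi\vee\varphi \mid \varphi\to\varphi \mid \Box\varphi \mid \Diamond\varphi$. Axioms: $\mathsf{K}_\Box$: $\Box(\varphi\to\psi)\to(\Box\varphi\to\Box\psi)$; $\mathsf{K}_\Diamond$: $\Box(\varphi\to\psi)\to(\Diamond\varphi\to\Diamond\psi)$. For a set $\mathsf{Ax}\subseteq\mathbf{L}$, the logic $\mathsf{CK}\oplus\mathsf{Ax}$ is the relation $\Gamma\vdash_{\mathsf{Ax}}\varphi$ inductively generated by: (Ax) $\Gamma\vdash\varphi$ whenever $\varphi$ is a substitution instance of an axiom of a standard Hilbert axiomatisation of intuitionistic propositional logic, of $\mathsf{K}_\Box$, of $\mathsf{K}_\Diamond$, or of an element of $\mathsf{Ax}$; (El) $\Gamma\vdash\varphi$ if $\varphi\in\Gamma$; (MP) from $\Gamma\vdash\varphi$ and $\Gamma\vdash\varphi\to\psi$ infer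 $\Gamma\vdash\psi$; (Nec) from $\emptyset\vdash\varphi$ infer $\Gamma\vdash\Box\varphi$. A theory is a set closed under $\vdash_{\mathsf{Ax}}$; it is prime if $\varphi\vee\psi\in\Gamma$ implies $\varphi\in\Gamma$ or $\psi\in\Gamma$ (prime theories may contain $\bot$; $\mathbf{L}$ itself is one). A $\mathsf{CK}$-frame is a tuple $(X,e,\le,R)$ where $(X,\le)$ is a preorder, $e\in X$ is a maximal element of $(X,\le)$, and $R$ is a binary relation on $X$ with $eRx$ iff $x=e$. A valuation assigns to each variable $p$ an upset $V(p)$ with $e\in V(p)$. Forcing: $x\Vdash p$ iff $x\in V(p)$; $x\Vdash\bot$ iff $x=e$; $\wedge,\vee$ pointwise; $x\Vdash\varphi\to\psi$ iff for all $y\ge x$, $y\Vdash\varphi$ implies $y\Vdash\psi$; $x\Vdash\Box\varphi$ iff for all $y,z$ with $x\le y$ and $yRz$, $z\Vdash\varphi$; $x\Vdash\Diamond\varphi$ iff for all $y\ge x$ there is $z$ with $yRz$ and $z\Vdash\varphi$. A frame validates a formula if it is forced at every world under every valuation. For a class $\mathcal{F}$ of frames, $\Gamma\Vdash_{\mathcal{F}}\varphi$ means: for every frame in $\mathcal{F}$, every valuation and every world $x$, if $x$ forces all of $\Gamma$ then $x\Vdash\varphi$. Canonical frame: a segment (relative to $\mathsf{CK}\oplus\mathsf{Ax}$) is a pair $(\Gamma,U)$ with $\Gamma$ a prime theory and $U$ a set of prime theories such that (1) if $\Box\varphi\in\Gamma$ then $\varphi\in\Delta$ for all $\Delta\in U$,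 and (2) if $\Diamond\varphi\in\Gamma$ then $\varphi\in\Delta$ for some $\Delta\in U$. $\mathcal{X}_{\mathsf{CK}\oplus\mathsf{Ax}}=(SEG,(\mathbf{L},\{\mathbf{L}\}),\precsim,R)$ where $SEG$ is the set of all segments, $(\Gamma,U)\precsim(\Gamma',U')$ iff $\Gamma\subseteq\Gamma'$, and $(\Gamma,U)R(\Gamma',U')$ iff $\Gamma'\in U$. *)

From Stdlib Require Import Classical FunctionalExtensionality PropExtensionality ProofIrrelevance.

Inductive form : Type :=
| Var : nat -> form
| Bot : form
| And : form -> form -> form
| Or : form -> form -> form
| Imp : form -> form -> form
| Box : form -> form
| Dia : form -> form.

Fixpoint subst (s : nat -> form) (f : form) : form :=
  match f with
  | Var p => s p
  | Bot => Bot
  | And a b => And (subst s a) (subst s b)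
  | Or a b => Or (subst s a) (subst s b)
  | Imp a b => Imp (subst s a) (subst s b)
  | Box a => Box (subst s a)
  | Dia a => Dia (subst s a)
  end.

Inductive IPC_axiom : form -> Prop :=
| IA1 a b : IPC_axiom (Imp a (Imp b a))
| IA2 a b c : IPC_axiom (Imp (Imp a (Imp b c)) (Imp (Imp a b) (Imp a c)))
| IA3 a b : IPC_axiom (Imp (And a b) a)
| IA4 a b : IPC_axiom (Imp (And a b) b)
| IA5 a b : IPC_axiom (Imp a (Imp b (And a b)))
| IA6 a b : IPC_axiom (Imp a (Or a b))
| IA7 a b : IPC_axiom (Imp b (Or a b))
| IA8 a b c : IPC_axiom (Imp (Imp a c) (Imp (Imp b c) (Imp (Or a b) c)))
| IA9 a : IPC_axiom (Imp Bot a).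

Inductive CK_axiom (Ax : form -> Prop) : form -> Prop :=
| AxIPC f : IPC_axiom f -> CK_axiom Ax f
| AxKBox a b : CK_axiom Ax (Imp (Box (Imp a b)) (Imp (Box a) (Box b)))
| AxKDia a b : CK_axiom Ax (Imp (Box (Imp a b)) (Imp (Dia a) (Dia b)))
| AxExtra f s : Ax f -> CK_axiom Ax (subst s f).

Inductive deriv (Ax : form -> Prop) : (form -> Prop) -> form -> Prop :=
| DAx G f : CK_axiom Ax f -> deriv Ax G f
| DEl G f : G f -> deriv Ax G f
| DMP G f g : deriv Ax G f -> deriv Ax G (Imp f g) -> deriv Ax G g
| DNec G f : deriv Ax (fun _ => False) f -> deriv Ax G (Box f).

Definition theory (Ax : form -> Prop) (G : form -> Prop) : Prop :=
  forall f, deriv Ax G f -> G f.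

Definition prime_theory (Ax : form -> Prop) (G : form -> Prop) : Prop :=
  theory Ax G /\ (forall a b, G (Or a b) -> G a \/ G b).

Record CKframe : Type := {
  world :> Type;
  fe : world;
  fle : world -> world -> Prop;
  fR : world -> world -> Prop;
  fle_refl : forall x, fle x x;
  fle_trans : forall x y z, fle x y -> fle y z -> fle x z;
  fe_max : forall x, fle fe x -> fle x fe;
  fR_e : forall x, fR fe x <-> x = fe
}.

Definition valuation (X : CKframe) (V : nat -> X -> Prop) : Prop :=
  forall p, V p (fe X) /\ (forall x y, fle X x y -> V p x -> V p y).

Fixpoint forces (X : CKframe) (V : nat -> X -> Prop) (x : X) (f : form) : Prop :=
  match f with
  | Var p => V p x
  | Bot => x = fe X
  | And a b => forces X V x a /\ forces X V x b
  | Or a b => forces X V x a \/ forces X V x b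
  | Imp a b => forall y, fle X x y -> forces X V y a -> forces X V y b
  | Box a => forall y z, fle X x y -> fR X y z -> forces X V z a
  | Dia a => forall y, fle X x y -> exists z, fR X y z /\ forces X V z a
  end.

Definition validates (X : CKframe) (f : form) : Prop :=
  forall V, valuation X V -> forall x : X, forces X V x f.

Definition sem_conseq (F : CKframe -> Prop) (G : form -> Prop) (f : form) : Prop :=
  forall X : CKframe, F X -> forall V, valuation X V ->
    forall x : X, (forall g, G g -> forces X V x g) -> forces X V x f.

Definition fullL : form -> Prop := fun _ => True.

Definition is_segment (Ax : form -> Prop)
    (p : (form -> Prop) * ((form -> Prop) -> Prop)) : Prop :=
  prime_theory Ax (fst p) /\
  (forall D, snd p D -> prime_theory Ax D) /\
  (forall a, fst p (Box a) -> forall D, snd p D -> D a) /\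
  (forall a, fst p (Dia a) -> exists D, snd p D /\ D a).

Definition segment (Ax : form -> Prop) : Type :=
  { p : (form -> Prop) * ((form -> Prop) -> Prop) | is_segment Ax p }.

Lemma fullL_prime Ax : prime_theory Ax fullL.
Proof. split; [intros f _; exact I | intros a b _; left; exact I]. Qed.

Lemma e_segment Ax : is_segment Ax (fullL, fun D => D = fullL).
Proof.
  split; [|split; [|split]]; simpl.
  - apply fullL_prime.
  - intros D HD; rewrite HD; apply fullL_prime.
  - intros a _ D HD; rewrite HD; exact I.
  - intros a _; exists fullL; split; [reflexivity | exact I].
Qed.

Definition seg_e Ax : segment Ax := exist _ _ (e_segment Ax).

Definition seg_le Ax (s t : segment Ax) : Prop :=
  forall f, fst (proj1_sig s) f -> fst (proj1_sig t) f.

Definition seg_R Ax (s t : segment Ax) : Prop :=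
  snd (proj1_sig s) (fst (proj1_sig t)).

Lemma seg_le_refl Ax s : seg_le Ax s s.
Proof. intros f H; exact H. Qed.

Lemma seg_le_trans Ax s t u : seg_le Ax s t -> seg_le Ax t u -> seg_le Ax s u.
Proof. intros H1 H2 f H; apply H2, H1, H. Qed.

Lemma seg_e_max Ax s : seg_le Ax (seg_e Ax) s -> seg_le Ax s (seg_e Ax).
Proof. intros _ f _; exact I. Qed.

Lemma seg_R_e Ax s : seg_R Ax (seg_e Ax) s <-> s = seg_e Ax.
Proof.
  split.
  - destruct s as [[G U] [HG [HU [HB HD]]]]; unfold seg_R; simpl; intros HGe.
    subst G.
    assert (HUe : U = fun D => D = fullL).
    { apply functional_extensionality; intros D; apply propositional_extensionality.
      split.
      - intros HD'; apply functional_extensionality; intros f;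
          apply propositional_extensionality; split; [intros _; exact I|].
        intros _; exact (HB f I D HD').
      - intros ->. destruct (HD Bot I) as [D [HD' _]].
        replace fullL with D; [exact HD'|].
        apply functional_extensionality; intros f;
          apply propositional_extensionality; split; [intros _; exact I|].
        intros _; exact (HB f I D HD'). }
    subst U. unfold seg_e. f_equal. apply proof_irrelevance.
  - intros ->; reflexivity.
Qed.

Definition canonical_frame (Ax : form -> Prop) : CKframe := {|
  world := segment Ax;
  fe := seg_e Ax;
  fle := seg_le Ax;
  fR := seg_R Ax;
  fle_refl := seg_le_refl Ax;
  fle_trans := seg_le_trans Ax;
  fe_max := seg_e_max Ax;
  fR_e := seg_R_e Ax
|}.

(* If Γ ⊬ φ, the Lindenbaum lemma extends Γ to a
   prime theory Δ avoiding φ. In the canonical frame the valuation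
   p ↦ {(Θ,U) | p ∈ Θ} satisfies the truth lemma "(Θ,U) ⊩ ψ iff ψ ∈ Θ", so the
   segment (Δ, {L}) forces Γ but not φ, contradicting Γ ⊩_F φ. *)
From Stdlib Require Import Classical FunctionalExtensionality PropExtensionality List Lia.
From Stdlib Require Cantor.

Section HilbertCalculus.
Variable Ax : form -> Prop.

Lemma deriv_IPC G f : IPC_axiom f -> deriv Ax G f.
Proof. intros H; apply DAx, AxIPC, H. Qed.

Lemma deriv_imp_refl G a : deriv Ax G (Imp a a).
Proof.
  eapply DMP; [apply deriv_IPC, (IA1 a a)|].
  eapply DMP; [apply deriv_IPC, (IA1 a (Imp a a))|].
  apply deriv_IPC, (IA2 a (Imp a a) a).
Qed.

Lemma deriv_weaken G G' f :
  (forall x, G x -> G' x) -> deriv Ax G f -> deriv Ax G' f.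
Proof.
  intros Hsub D; revert G' Hsub; induction D; intros G' Hsub.
  - apply DAx; assumption.
  - apply DEl, Hsub; assumption.
  - eapply DMP; eauto.
  - apply DNec; assumption.
Qed.

Lemma deduction G a f :
  deriv Ax (fun y => G y \/ y = a) f -> deriv Ax G (Imp a f).
Proof.
  intros D; remember (fun y => G y \/ y = a) as H eqn:EH.
  assert (Hsub : forall x, H x -> G x \/ x = a) by (subst H; auto).
  clear EH; induction D as [H f Hf | H f Hf | H f g _ IHD1 _ IHD2 | H f Df _].
  - eapply DMP; [apply DAx, Hf | apply deriv_IPC, IA1].
  - destruct (Hsub f Hf) as [Hf' | ->].
    + eapply DMP; [apply DEl, Hf' | apply deriv_IPC, IA1].
    + apply deriv_imp_refl.
  - eapply DMP; [apply IHD1, Hsub|].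
    eapply DMP; [apply IHD2, Hsub | apply deriv_IPC, IA2].
  - eapply DMP; [apply DNec, Df | apply deriv_IPC, IA1].
Qed.

Lemma deriv_compact G f : deriv Ax G f ->
  exists l, (forall x, In x l -> G x) /\ deriv Ax (fun x => In x l) f.
Proof.
  induction 1 as [G f Hf | G f Hf | G f g _ [l1 [H1 D1]] _ [l2 [H2 D2]] | G f Df _].
  - exists nil; split; [contradiction | apply DAx, Hf].
  - exists (f :: nil); split.
    + intros x [-> | []]; exact Hf.
    + apply DEl; left; reflexivity.
  - exists (l1 ++ l2); split.
    + intros x Hx; destruct (in_app_or _ _ _ Hx); auto.
    + eapply DMP; [eapply deriv_weaken; [| exact D1] | eapply deriv_weaken; [| exact D2]];
        intros; apply in_or_app; auto.
  - exists nil; split; [contradiction | apply DNec, Df].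
Qed.

End HilbertCalculus.

Section PrimeTheories.
Context {Ax G : form -> Prop} (HG : prime_theory Ax G).

Lemma prime_theory_deriv f : deriv Ax G f -> G f.
Proof. apply (proj1 HG). Qed.

Lemma prime_theory_MP a b : G (Imp a b) -> G a -> G b.
Proof.
  intros Hab Ha; apply prime_theory_deriv; eapply DMP; apply DEl; eassumption.
Qed.

Lemma prime_theory_IPC f : IPC_axiom f -> G f.
Proof. intros H; apply prime_theory_deriv, deriv_IPC, H. Qed.

Lemma prime_theory_Bot_full : G Bot -> G = fullL.
Proof.
  intros Hbot; apply functional_extensionality; intros f.
  apply propositional_extensionality; split; [constructor|].
  intros _; eapply prime_theory_MP; [apply prime_theory_IPC, IA9 | exact Hbot].
Qed.

(* Compactness reduces this to finitely many boxed hypotheses, which are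
   discharged one at a time by K_Box. *)
Lemma prime_theory_Box_of_deriv a :
  deriv Ax (fun x => G (Box x)) a -> G (Box a).
Proof.
  intros D; destruct (deriv_compact _ _ _ D) as [l [Hl Dl]]; clear D.
  revert a Hl Dl; induction l as [| x l IHl]; intros a Hl Dl.
  - apply prime_theory_deriv, DNec.
    eapply deriv_weaken; [| exact Dl]; contradiction.
  - assert (Hxa : G (Box (Imp x a))).
    { apply IHl; [intros y Hy; apply Hl; right; exact Hy|].
      apply deduction; eapply deriv_weaken; [| exact Dl].
      intros y [-> | Hy]; auto. }
    eapply prime_theory_MP; [| apply Hl; left; reflexivity].
    eapply prime_theory_MP; [| exact Hxa].
    apply prime_theory_deriv, DAx, AxKBox.
Qed.

End PrimeTheories.

Fixpoint form_code (f : form) : nat :=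
  match f with
  | Var n => Cantor.to_nat (0, n)
  | Bot => Cantor.to_nat (1, 0)
  | And a b => Cantor.to_nat (2, Cantor.to_nat (form_code a, form_code b))
  | Or a b => Cantor.to_nat (3, Cantor.to_nat (form_code a, form_code b))
  | Imp a b => Cantor.to_nat (4, Cantor.to_nat (form_code a, form_code b))
  | Box a => Cantor.to_nat (5, form_code a)
  | Dia a => Cantor.to_nat (6, form_code a)
  end.

Lemma Cantor_to_nat_inj m n p q :
  Cantor.to_nat (m, n) = Cantor.to_nat (p, q) -> m = p /\ n = q.
Proof.
  intros H; apply (f_equal Cantor.of_nat) in H.
  rewrite !Cantor.cancel_of_to in H; injection H; auto.
Qed.

Lemma form_code_inj f g : form_code f = form_code g -> f = g.
Proof.
  revert g; induction f; destruct g; intros H; cbn [form_code] in H;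
    apply Cantor_to_nat_inj in H; destruct H as [H1 H2]; try discriminate.
  all: try (apply Cantor_to_nat_inj in H2; destruct H2 as [H2 H3]).
  all: f_equal; auto.
Qed.

Section Lindenbaum.
Variable Ax : form -> Prop.
Variable G : form -> Prop.
Variable f0 : form.

Fixpoint lindenbaum_chain (n : nat) : form -> Prop :=
  match n with
  | 0 => G
  | S n => fun x => lindenbaum_chain n x \/
      (form_code x = n /\ ~ deriv Ax (fun y => lindenbaum_chain n y \/ y = x) f0)
  end.

Definition lindenbaum_limit (x : form) : Prop := exists n, lindenbaum_chain n x.

Lemma lindenbaum_chain_mono n m x :
  n <= m -> lindenbaum_chain n x -> lindenbaum_chain m x.
Proof. induction 1; simpl; auto. Qed.

Lemma lindenbaum_chain_consistent n :
  ~ deriv Ax G f0 -> ~ deriv Ax (lindenbaum_chain n) f0.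
Proof.
  intros H0; induction n as [| n IHn]; simpl; [exact H0|].
  intros D; apply IHn.
  destruct (classic (exists x, form_code x = n /\
      ~ deriv Ax (fun y => lindenbaum_chain n y \/ y = x) f0)) as [[x [Ex Hx]] | Hn].
  - exfalso; apply Hx; eapply deriv_weaken; [| exact D].
    intros y [Hy | [Ey _]]; auto.
    right; apply form_code_inj; congruence.
  - eapply deriv_weaken; [| exact D].
    intros y [Hy | [Ey Hy]]; [exact Hy|].
    exfalso; apply Hn; eauto.
Qed.

Lemma lindenbaum_chain_bound l : (forall x, In x l -> lindenbaum_limit x) ->
  exists N, forall x, In x l -> lindenbaum_chain N x.
Proof.
  induction l as [| a l IHl]; intros Hl; [exists 0; contradiction|].
  destruct IHl as [N HN]; [intros x Hx; apply Hl; right; exact Hx|].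
  destruct (Hl a (or_introl eq_refl)) as [m Hm].
  exists (max N m); intros x [<- | Hx].
  - apply (lindenbaum_chain_mono m); [lia | exact Hm].
  - apply (lindenbaum_chain_mono N); [lia | apply HN, Hx].
Qed.

Lemma lindenbaum_limit_consistent :
  ~ deriv Ax G f0 -> ~ deriv Ax lindenbaum_limit f0.
Proof.
  intros H0 D; destruct (deriv_compact _ _ _ D) as [l [Hl Dl]].
  destruct (lindenbaum_chain_bound l Hl) as [N HN].
  apply (lindenbaum_chain_consistent N H0); eapply deriv_weaken; [exact HN | exact Dl].
Qed.

Lemma lindenbaum_limit_maximal x :
  ~ lindenbaum_limit x -> deriv Ax lindenbaum_limit (Imp x f0).
Proof.
  intros Hx; apply deduction.
  destruct (classic (deriv Ax
      (fun y => lindenbaum_chain (form_code x) y \/ y = x) f0)) as [D | D].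
  - eapply deriv_weaken; [| exact D].
    intros y [Hy | Hy]; [left; exists (form_code x); exact Hy | right; exact Hy].
  - exfalso; apply Hx; exists (S (form_code x)); right; auto.
Qed.

Lemma lindenbaum : ~ deriv Ax G f0 ->
  exists D, prime_theory Ax D /\ (forall x, G x -> D x) /\ ~ D f0.
Proof.
  intros H0; pose proof (lindenbaum_limit_consistent H0) as HL.
  exists lindenbaum_limit; split; [split|split].
  - intros x Dx; apply NNPP; intros Hx; apply HL.
    eapply DMP; [exact Dx | apply lindenbaum_limit_maximal, Hx].
  - intros a b Hab; apply NNPP; intros Hn; apply HL.
    eapply DMP; [apply DEl, Hab|].
    eapply DMP; [apply (lindenbaum_limit_maximal b); intro; apply Hn; auto|].
    eapply DMP; [apply (lindenbaum_limit_maximal a); intro; apply Hn; auto|].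
    apply deriv_IPC, IA8.
  - intros x Hx; exists 0; exact Hx.
  - intros Hf; apply HL, DEl, Hf.
Qed.

End Lindenbaum.

Section CanonicalFrame.
Variable Ax : form -> Prop.

Definition seg_theory (s : segment Ax) : form -> Prop := fst (proj1_sig s).

Definition seg_succ (s : segment Ax) : (form -> Prop) -> Prop := snd (proj1_sig s).

Lemma seg_theory_prime s : prime_theory Ax (seg_theory s).
Proof. exact (proj1 (proj2_sig s)). Qed.

Lemma seg_succ_prime s D : seg_succ s D -> prime_theory Ax D.
Proof. exact (proj1 (proj2 (proj2_sig s)) D). Qed.

Lemma seg_box s a D : seg_theory s (Box a) -> seg_succ s D -> D a.
Proof. intros Ha; exact (proj1 (proj2 (proj2 (proj2_sig s))) a Ha D). Qed.

Lemma seg_dia s a : seg_theory s (Dia a) -> exists D, seg_succ s D /\ D a.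
Proof. exact (proj2 (proj2 (proj2 (proj2_sig s))) a). Qed.

Lemma seg_eq_e s : seg_theory s = fullL -> s = seg_e Ax.
Proof. apply (seg_R_e Ax s). Qed.

Lemma prime_extension_imp G a b : prime_theory Ax G -> ~ G (Imp a b) ->
  exists D, prime_theory Ax D /\ (forall x, G x -> D x) /\ D a /\ ~ D b.
Proof.
  intros HG Hab.
  destruct (lindenbaum Ax (fun y => G y \/ y = a) b) as [D [HD [Hsub Hb]]].
  - intros Db; apply Hab, (prime_theory_deriv HG), deduction, Db.
  - exists D; auto 6.
Qed.

Lemma prime_extension_box G a : prime_theory Ax G -> ~ G (Box a) ->
  exists S, prime_theory Ax S /\ (forall x, G (Box x) -> S x) /\ ~ S a.
Proof.
  intros HG Ha; apply lindenbaum.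
  intros Da; apply Ha, (prime_theory_Box_of_deriv HG), Da.
Qed.

Lemma prime_extension_dia G a b : prime_theory Ax G -> ~ G (Dia a) -> G (Dia b) ->
  exists E, prime_theory Ax E /\ (forall x, G (Box x) -> E x) /\ E b /\ ~ E a.
Proof.
  intros HG Ha Hb.
  destruct (lindenbaum Ax (fun y => G (Box y) \/ y = b) a) as [E [HE [Hsub Ea]]].
  - intros D; apply Ha.
    assert (Hba : G (Box (Imp b a)))
      by apply (prime_theory_Box_of_deriv HG), deduction, D.
    apply (prime_theory_MP HG (Dia b)); [| exact Hb].
    apply (prime_theory_MP HG (Box (Imp b a))); [| exact Hba].
    apply (prime_theory_deriv HG), DAx, AxKDia.
  - exists E; auto 6.
Qed.

Lemma prime_segment_ok D : prime_theory Ax D -> is_segment Ax (D, fun E => E = fullL).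
Proof.
  intros HD; split; [|split; [|split]]; simpl; [exact HD | | |].
  - intros E ->; apply fullL_prime.
  - intros a _ E ->; constructor.
  - intros a _; exists fullL; split; [reflexivity | constructor].
Qed.

Definition prime_segment D (HD : prime_theory Ax D) : segment Ax :=
  exist _ _ (prime_segment_ok D HD).

(* The inconsistent theory L is kept as a successor: it contains every formula,
   so it takes care of the diamond condition (2) of a segment. *)
Lemma box_refuting_segment G S : prime_theory Ax G -> prime_theory Ax S ->
  (forall x, G (Box x) -> S x) -> is_segment Ax (G, fun E => E = fullL \/ E = S).
Proof.
  intros HG HS Hsub; split; [|split; [|split]]; simpl; [exact HG | | |].
  - intros E [-> | ->]; [apply fullL_prime | exact HS].
  - intros a Ha E [-> | ->]; [constructor | apply Hsub, Ha].
  - intros a _; exists fullL; split; [left; reflexivity | constructor].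
Qed.

Lemma dia_refuting_segment G a : prime_theory Ax G -> ~ G (Dia a) ->
  is_segment Ax (G, fun E => prime_theory Ax E /\ (forall x, G (Box x) -> E x) /\ ~ E a).
Proof.
  intros HG Ha; split; [|split; [|split]]; simpl; [exact HG | | |].
  - intros E [HE _]; exact HE.
  - intros b Hb E [_ [HE _]]; apply HE, Hb.
  - intros b Hb; destruct (prime_extension_dia G a b HG Ha Hb) as [E [HE [Hsub [Eb Ea]]]].
    exists E; auto.
Qed.

Definition canonical_valuation (p : nat) (s : segment Ax) : Prop := seg_theory s (Var p).

Lemma canonical_valuation_valuation : valuation (canonical_frame Ax) canonical_valuation.
Proof. intros p; split; [constructor | intros s t Hst Hs; apply Hst, Hs]. Qed.

Lemma truth_lemma a (s : segment Ax) :
  forces (canonical_frame Ax) canonical_valuation s a <-> seg_theory s a.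
Proof.
  revert s; induction a as [p | | a IHa b IHb | a IHa b IHb | a IHa b IHb | a IHa | a IHa];
    intros s; pose proof (seg_theory_prime s) as Hs; simpl.
  - reflexivity.
  - split; [intros ->; constructor | intros Hbot; apply seg_eq_e, (prime_theory_Bot_full Hs), Hbot].
  - rewrite IHa, IHb; split.
    + intros [Ha Hb]; apply (prime_theory_MP Hs b); [| exact Hb].
      apply (prime_theory_MP Hs a); [apply (prime_theory_IPC Hs), IA5 | exact Ha].
    + intros Hab; split; (apply (prime_theory_MP Hs (And a b)); [| exact Hab]);
        apply (prime_theory_IPC Hs); constructor.
  - rewrite IHa, IHb; split; [| apply Hs].
    intros [Ha | Hb]; [apply (prime_theory_MP Hs a) | apply (prime_theory_MP Hs b)];
      try assumption; apply (prime_theory_IPC Hs); constructor.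
  - split.
    + intros H; apply NNPP; intros Hab.
      destruct (prime_extension_imp _ a b Hs Hab) as [D [HD [Hsub [Da Db]]]].
      apply Db, (IHb (prime_segment D HD)), H;
        [exact Hsub | apply (IHa (prime_segment D HD)), Da].
    + intros Hab t Hst Ht; apply IHb; apply IHa in Ht.
      apply (prime_theory_MP (seg_theory_prime t) a); [apply Hst, Hab | exact Ht].
  - split.
    + intros H; apply NNPP; intros Ha.
      destruct (prime_extension_box _ a Hs Ha) as [S [HS [Hsub Sa]]].
      apply Sa, (IHa (prime_segment S HS)), (H (exist _ _ (box_refuting_segment _ _ Hs HS Hsub)));
        [intros x Hx; exact Hx | right; reflexivity].
    + intros Ha t u Hst Htu; apply IHa.
      exact (seg_box t a _ (Hst _ Ha) Htu).
  - split.
    + intros H; apply NNPP; intros Ha.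
      destruct (H (exist _ _ (dia_refuting_segment _ a Hs Ha))) as [u [Hu Fu]];
        [intros x Hx; exact Hx|].
      apply IHa in Fu; exact (proj2 (proj2 Hu) Fu).
    + intros Ha t Hst.
      destruct (seg_dia t a (Hst _ Ha)) as [D [HtD Da]].
      exists (prime_segment D (seg_succ_prime t D HtD)); split;
        [exact HtD | apply IHa, Da].
Qed.

End CanonicalFrame.

Theorem mainTheorem4 (Ax : form -> Prop) (F : CKframe -> Prop) :
  F (canonical_frame Ax) ->
  (forall X : CKframe, F X -> forall (a : form) (s : nat -> form),
      Ax a -> validates X (subst s a)) ->
  forall (G : form -> Prop) (f : form), sem_conseq F G f -> deriv Ax G f.
Proof.
  intros Hcan _ G f Hsem; apply NNPP; intros Hf.
  destruct (lindenbaum Ax G f Hf) as [D [HD [Hsub Df]]].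
  set (s := prime_segment Ax D HD).
  apply Df, (truth_lemma Ax f s), Hsem;
    [exact Hcan | apply canonical_valuation_valuation |].
  intros g Hg; apply (truth_lemma Ax g s), Hsub, Hg.
Qed.
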